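(* Let $F\colon\mathcal M\to\mathcal N$ be a (symmetric) monoidal functor between (symmetric) monoidal categories. If $\mathcal N$ is purely monoidal, then the set $\Theta(F)$ has at most one element. If in addition $\mathcal M$ is a 2-group, then $\Theta(F)$ has exactly one element.
   Context: Monoidal functors are strong monoidal. For a monoidal functor $F\colon\mathcal M\to\mathcal N$, $\Theta(F)$ denotes the set of monoidal natural isomorphisms $F\Rightarrow \Delta_{I_{\mathcal N}}$, where $\Delta_{I_{\mathcal N}}\colon\mathcal M\to\mathcal N$ is the constant (monoidal) functor at the unit object $I_{\mathcal N}$. An object $A$ of a monoidal category is weakly invertible if there is $B$ with $A\otimes B\cong B\otimes A\cong I$. A 2-group is a monoidal category which is a groupoid and in which every object is weakly invertible. A monoidal category is purely monoidal (pure) if for every pair of weakly invertible objects there is exactly one isomorphism between them. *)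

Set Implicit Arguments.
Unset Strict Implicit.

Record Category := {
  Ob :> Type;
  Hom : Ob -> Ob -> Type;
  idm : forall A : Ob, Hom A A;
  comp : forall A B C : Ob, Hom B C -> Hom A B -> Hom A C;
  comp_idl : forall (A B : Ob) (f : Hom A B), comp (idm B) f = f;
  comp_idr : forall (A B : Ob) (f : Hom A B), comp f (idm A) = f;
  comp_assoc : forall (A B C D : Ob) (h : Hom C D) (g : Hom B C) (f : Hom A B),
      comp h (comp g f) = comp (comp h g) f
}.
Arguments Hom {c} _ _.
Arguments idm {c} A.
Arguments comp {c A B C} _ _.

Notation "g ∘ f" := (comp g f) (at level 40, left associativity).

Definition is_iso (C : Category) (A B : C) (f : Hom A B) : Prop :=
  exists g : Hom B A, g ∘ f = idm A /\ f ∘ g = idm B.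

Definition isomorphic (C : Category) (A B : C) : Prop :=
  exists f : Hom A B, is_iso f.

Section MonoidalAxioms.
Variable C : Category.
Variable tens : C -> C -> C.
Variable tensm : forall A B A' B' : C, Hom A A' -> Hom B B' -> Hom (tens A B) (tens A' B').
Variable I : C.
Variable alpha : forall A B D : C, Hom (tens (tens A B) D) (tens A (tens B D)).
Variable lam : forall A : C, Hom (tens I A) A.
Variable rho : forall A : C, Hom (tens A I) A.

Definition monoidal_axioms : Prop :=
  (forall A B : C, tensm (idm A) (idm B) = idm (tens A B)) /\
  (forall (A1 A2 A3 B1 B2 B3 : C) (f : Hom A1 A2) (f' : Hom A2 A3)
          (g : Hom B1 B2) (g' : Hom B2 B3),
      tensm (f' ∘ f) (g' ∘ g) = tensm f' g' ∘ tensm f g) /\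
  (forall A B D : C, is_iso (alpha A B D)) /\
  (forall A : C, is_iso (lam A)) /\
  (forall A : C, is_iso (rho A)) /\
  (forall (A A' B B' D D' : C) (f : Hom A A') (g : Hom B B') (h : Hom D D'),
      alpha A' B' D' ∘ tensm (tensm f g) h = tensm f (tensm g h) ∘ alpha A B D) /\
  (forall (A A' : C) (f : Hom A A'), lam A' ∘ tensm (idm I) f = f ∘ lam A) /\
  (forall (A A' : C) (f : Hom A A'), rho A' ∘ tensm f (idm I) = f ∘ rho A) /\
  (forall W X Y Z : C,
      alpha W X (tens Y Z) ∘ alpha (tens W X) Y Z
      = tensm (idm W) (alpha X Y Z) ∘ alpha W (tens X Y) Z
          ∘ tensm (alpha W X Y) (idm Z)) /\
  (forall X Y : C,
      tensm (idm X) (lam Y) ∘ alpha X I Y = tensm (rho X) (idm Y)).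
End MonoidalAxioms.

Record MonoidalCategory := {
  mcat :> Category;
  tens : mcat -> mcat -> mcat;
  tensm : forall A B A' B' : mcat, Hom A A' -> Hom B B' -> Hom (tens A B) (tens A' B');
  munit : mcat;
  massoc : forall A B D : mcat, Hom (tens (tens A B) D) (tens A (tens B D));
  mlunit : forall A : mcat, Hom (tens munit A) A;
  mrunit : forall A : mcat, Hom (tens A munit) A;
  mon_ax : monoidal_axioms tensm massoc mlunit mrunit
}.
Arguments tens {m} _ _.
Arguments tensm {m A B A' B'} _ _.
Arguments munit {m}.
Arguments massoc {m} A B D.
Arguments mlunit {m} A.
Arguments mrunit {m} A.

Notation "A ⊗ B" := (tens A B) (at level 35).
Notation "f ⊗m g" := (tensm f g) (at level 35).

Section FunctorAxioms.
Variables M N : MonoidalCategory.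
Variable F : M -> N.
Variable Fm : forall A B : M, Hom A B -> Hom (F A) (F B).
Variable phi : forall X Y : M, Hom (F X ⊗ F Y) (F (X ⊗ Y)).
Variable phi0 : Hom (@munit N) (F munit).

Definition monoidal_functor_axioms : Prop :=
  (forall A : M, Fm (idm A) = idm (F A)) /\
  (forall (A B D : M) (g : Hom B D) (f : Hom A B), Fm (g ∘ f) = Fm g ∘ Fm f) /\
  (forall X Y : M, is_iso (phi X Y)) /\
  is_iso phi0 /\
  (forall (X X' Y Y' : M) (f : Hom X X') (g : Hom Y Y'),
      phi X' Y' ∘ (Fm f ⊗m Fm g) = Fm (f ⊗m g) ∘ phi X Y) /\
  (forall X Y Z : M,
      Fm (massoc X Y Z) ∘ phi (X ⊗ Y) Z ∘ (phi X Y ⊗m idm (F Z))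
      = phi X (Y ⊗ Z) ∘ (idm (F X) ⊗m phi Y Z) ∘ massoc (F X) (F Y) (F Z)) /\
  (forall X : M,
      Fm (mlunit X) ∘ phi munit X ∘ (phi0 ⊗m idm (F X)) = mlunit (F X)) /\
  (forall X : M,
      Fm (mrunit X) ∘ phi X munit ∘ (idm (F X) ⊗m phi0) = mrunit (F X)).
End FunctorAxioms.

Record MonoidalFunctor (M N : MonoidalCategory) := {
  fob :> M -> N;
  fmor : forall A B : M, Hom A B -> Hom (fob A) (fob B);
  fphi : forall X Y : M, Hom (fob X ⊗ fob Y) (fob (X ⊗ Y));
  fphi0 : Hom (@munit N) (fob munit);
  fun_ax : monoidal_functor_axioms fmor fphi fphi0
}.
Arguments fmor {M N} m {A B} _.
Arguments fphi {M N} m X Y.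
Arguments fphi0 {M N} m.

(** * Theta(F): monoidal natural isomorphisms F => Delta_I.
    The constant functor Delta_I : M -> N sends every object to I_N and
    every morphism to id_{I_N}; its monoidal structure maps are
    lambda_I : I ⊗ I -> I (= rho_I) and id_I : I -> I. *)
Definition in_Theta {M N : MonoidalCategory} (F : MonoidalFunctor M N)
    (theta : forall X : M, Hom (F X) (@munit N)) : Prop :=
  (forall X : M, is_iso (theta X)) /\
  (forall (X Y : M) (f : Hom X Y), theta Y ∘ fmor F f = idm munit ∘ theta X) /\
  (forall X Y : M,
      theta (X ⊗ Y) ∘ fphi F X Y = mlunit munit ∘ (theta X ⊗m theta Y)) /\
  theta munit ∘ fphi0 F = idm munit.

Definition weakly_invertible (M : MonoidalCategory) (A : M) : Prop :=
  exists B : M, isomorphic (A ⊗ B) munit /\ isomorphic (B ⊗ A) munit.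

Definition is_groupoid (C : Category) : Prop :=
  forall (A B : C) (f : Hom A B), is_iso f.

Definition is_2group (M : MonoidalCategory) : Prop :=
  is_groupoid M /\ forall A : M, weakly_invertible A.

Definition purely_monoidal (M : MonoidalCategory) : Prop :=
  forall A B : M, weakly_invertible A -> weakly_invertible B ->
    (exists f : Hom A B, is_iso f) /\
    (forall f g : Hom A B, is_iso f -> is_iso g -> f = g).

Arguments in_Theta {M N} F theta.

(** In a purely monoidal category any two isomorphisms from an object into
    the unit coincide, since such an object is weakly invertible. The
    components of an element of Theta(F) are such isomorphisms, which gives
    uniqueness. Conversely, each of the naturality and monoidality equations
    defining Theta(F) compares two isomorphisms with codomain the unit, as
    soon as the components are isomorphisms and every morphism of M is
    invertible; so in a pure N they hold for free. When M is a 2-group, every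
    F X is weakly invertible (strong monoidal functors preserve weak
    invertibility), hence admits an isomorphism to the unit, and choosing one
    for each X gives an element of Theta(F). *)
From Stdlib Require Import FunctionalExtensionality ClassicalEpsilon.

Section Isomorphisms.
Variable C : Category.

Lemma is_iso_id (A : C) : is_iso (idm A).
Proof. exists (idm A). split; apply comp_idl. Qed.

Lemma is_iso_comp (A B D : C) (f : Hom A B) (g : Hom B D) :
  is_iso f -> is_iso g -> is_iso (g ∘ f).
Proof.
  intros [f' [Hf'f Hff']] [g' [Hg'g Hgg']]. exists (f' ∘ g'). split.
  - rewrite comp_assoc, <- (comp_assoc f' g' g), Hg'g, comp_idr. exact Hf'f.
  - rewrite comp_assoc, <- (comp_assoc g f f'), Hff', comp_idr. exact Hgg'.
Qed.

Lemma isomorphic_refl (A : C) : isomorphic A A.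
Proof. exists (idm A). apply is_iso_id. Qed.

Lemma isomorphic_sym (A B : C) : isomorphic A B -> isomorphic B A.
Proof. intros [f [g [Hgf Hfg]]]. exists g, f. split; assumption. Qed.

Lemma isomorphic_trans (A B D : C) :
  isomorphic A B -> isomorphic B D -> isomorphic A D.
Proof. intros [f Hf] [g Hg]. exists (g ∘ f). apply is_iso_comp; assumption. Qed.

End Isomorphisms.

Arguments is_iso_id {C} A.
Arguments isomorphic_refl {C} A.

Section MonoidalIsomorphisms.
Variable M : MonoidalCategory.

Lemma is_iso_tensm (A B A' B' : M) (f : Hom A A') (g : Hom B B') :
  is_iso f -> is_iso g -> is_iso (f ⊗m g).
Proof.
  destruct (mon_ax M) as [tensm_id [tensm_comp _]].
  intros [f' [Hf'f Hff']] [g' [Hg'g Hgg']]. exists (f' ⊗m g'). split.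
  - rewrite <- tensm_comp, Hf'f, Hg'g. apply tensm_id.
  - rewrite <- tensm_comp, Hff', Hgg'. apply tensm_id.
Qed.

Lemma isomorphic_tens (A B A' B' : M) :
  isomorphic A A' -> isomorphic B B' -> isomorphic (A ⊗ B) (A' ⊗ B').
Proof. intros [f Hf] [g Hg]. exists (f ⊗m g). apply is_iso_tensm; assumption. Qed.

Lemma isomorphic_tens_unit_l (A : M) : isomorphic (munit ⊗ A) A.
Proof. exists (mlunit A). apply (mon_ax M). Qed.

Lemma weakly_invertible_munit : weakly_invertible (@munit M).
Proof.
  exists munit. split; apply isomorphic_tens_unit_l.
Qed.

Lemma weakly_invertible_isomorphic (A A' : M) :
  isomorphic A A' -> weakly_invertible A' -> weakly_invertible A.
Proof.
  intros HAA' [B [HA'B HBA']]. exists B. split.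
  - apply isomorphic_trans with (A' ⊗ B); [|exact HA'B].
    apply isomorphic_tens; [exact HAA' | apply isomorphic_refl].
  - apply isomorphic_trans with (B ⊗ A'); [|exact HBA'].
    apply isomorphic_tens; [apply isomorphic_refl | exact HAA'].
Qed.

End MonoidalIsomorphisms.

Section StrongMonoidalFunctors.
Variables M N : MonoidalCategory.
Variable F : MonoidalFunctor M N.

Lemma is_iso_fmor (A B : M) (f : Hom A B) : is_iso f -> is_iso (fmor F f).
Proof.
  destruct (fun_ax F) as [fmor_id [fmor_comp _]].
  intros [f' [Hf'f Hff']]. exists (fmor F f'). split.
  - rewrite <- fmor_comp, Hf'f. apply fmor_id.
  - rewrite <- fmor_comp, Hff'. apply fmor_id.
Qed.

Lemma isomorphic_fob (A B : M) : isomorphic A B -> isomorphic (F A) (F B).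
Proof. intros [f Hf]. exists (fmor F f). apply is_iso_fmor, Hf. Qed.

Lemma isomorphic_fob_tens (X Y : M) : isomorphic (F X ⊗ F Y) (F (X ⊗ Y)).
Proof. exists (fphi F X Y). apply (fun_ax F). Qed.

Lemma isomorphic_fob_munit : isomorphic (F munit) munit.
Proof. apply isomorphic_sym. exists (fphi0 F). apply (fun_ax F). Qed.

Lemma weakly_invertible_fob (X : M) : weakly_invertible X -> weakly_invertible (F X).
Proof.
  intros [Y [HXY HYX]]. exists (F Y). split.
  - apply isomorphic_trans with (F (X ⊗ Y)); [apply isomorphic_fob_tens|].
    apply isomorphic_trans with (F munit); [apply isomorphic_fob, HXY|].
    apply isomorphic_fob_munit.
  - apply isomorphic_trans with (F (Y ⊗ X)); [apply isomorphic_fob_tens|].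
    apply isomorphic_trans with (F munit); [apply isomorphic_fob, HYX|].
    apply isomorphic_fob_munit.
Qed.

End StrongMonoidalFunctors.

Arguments is_iso_fmor {M N} F {A B} f _.

Section PurelyMonoidal.
Variable N : MonoidalCategory.
Hypothesis N_pure : purely_monoidal N.

Lemma iso_to_munit_unique (A : N) (f g : Hom A munit) :
  is_iso f -> is_iso g -> f = g.
Proof.
  intros Hf Hg.
  assert (A_wi : weakly_invertible A).
  { apply weakly_invertible_isomorphic with munit.
    - exists f. exact Hf.
    - apply weakly_invertible_munit. }
  apply (N_pure _ _ A_wi (weakly_invertible_munit N)); assumption.
Qed.

Lemma iso_to_munit_family (T : Type) (A : T -> N) :
  (forall t, weakly_invertible (A t)) ->
  exists theta : forall t, Hom (A t) munit, forall t, is_iso (theta t).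
Proof.
  intros A_wi.
  assert (choose : forall t, {f : Hom (A t) munit | is_iso f}).
  { intros t. apply constructive_indefinite_description.
    apply (N_pure _ _ (A_wi t) (weakly_invertible_munit N)). }
  exists (fun t => proj1_sig (choose t)). intros t. exact (proj2_sig (choose t)).
Qed.

Section Theta.
Variable M : MonoidalCategory.
Variable F : MonoidalFunctor M N.

Lemma in_Theta_unique (theta1 theta2 : forall X : M, Hom (F X) munit) :
  in_Theta F theta1 -> in_Theta F theta2 -> theta1 = theta2.
Proof.
  intros [theta1_iso _] [theta2_iso _].
  apply functional_extensionality_dep. intros X.
  apply iso_to_munit_unique; trivial.
Qed.

Lemma in_Theta_of_is_iso (theta : forall X : M, Hom (F X) munit) :
  is_groupoid M -> (forall X, is_iso (theta X)) -> in_Theta F theta.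
Proof.
  intros M_groupoid theta_iso.
  destruct (fun_ax F) as [_ [_ [fphi_iso [fphi0_iso _]]]].
  destruct (mon_ax N) as [_ [_ [_ [mlunit_iso _]]]].
  split; [exact theta_iso | split; [| split]].
  - intros X Y f. apply iso_to_munit_unique.
    + apply is_iso_comp; [apply is_iso_fmor, M_groupoid | apply theta_iso].
    + apply is_iso_comp; [apply theta_iso | apply is_iso_id].
  - intros X Y. apply iso_to_munit_unique.
    + apply is_iso_comp; [apply fphi_iso | apply theta_iso].
    + apply is_iso_comp; [apply is_iso_tensm; apply theta_iso | apply mlunit_iso].
  - apply iso_to_munit_unique.
    + apply is_iso_comp; [exact fphi0_iso | apply theta_iso].
    + apply is_iso_id.
Qed.

End Theta.
End PurelyMonoidal.

Theorem lemma6p1 (M N : MonoidalCategory) (F : MonoidalFunctor M N) :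
  purely_monoidal N ->
  (forall theta1 theta2 : forall X : M, Hom (F X) (@munit N),
      in_Theta F theta1 -> in_Theta F theta2 -> theta1 = theta2) /\
  (is_2group M ->
     exists theta : forall X : M, Hom (F X) (@munit N), in_Theta F theta).
Proof.
  intros N_pure. split.
  - apply in_Theta_unique, N_pure.
  - intros [M_groupoid M_wi].
    destruct (@iso_to_munit_family N N_pure M F) as [theta theta_iso].
    { intros X. apply weakly_invertible_fob, M_wi. }
    exists theta. apply in_Theta_of_is_iso; assumption.
Qed.
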